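(* Let $p_1,p_2,p_3,p_4$ be the joints of a framework in $\mathbb{R}^2$ forming a non-degenerate rhombus, with bars $p_1p_2$, $p_2p_3$, $p_3p_4$, $p_4p_1$. If $g$ is any infinitesimal motion of this framework and $v_i=g(p_i)$ for $i=1,2,3,4$, then $v_1+v_3=v_2+v_4$.
   Context: A framework in $\mathbb{R}^d$ is a finite graph whose vertices (joints) are distinct points of $\mathbb{R}^d$ and whose edges (bars) are segments between pairs of joints. If $F$ is a framework with joint set $X$, an infinitesimal motion of $F$ is a map $g:X\to\mathbb{R}^d$ with $(g(x)-g(y))\cdot(x-y)=0$ for every bar $xy$ of $F$. Non-degenerate rhombus means $p_2-p_1=p_3-p_4$ and $p_3-p_2=p_4-p_1$, these two vectors are linearly independent, and all four sides have equal length. *)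

From Stdlib Require Import Reals List.
Open Scope R_scope.

Definition pt := (R * R)%type.
Definition vadd (a b : pt) : pt := (fst a + fst b, snd a + snd b).
Definition vsub (a b : pt) : pt := (fst a - fst b, snd a - snd b).
Definition dot (a b : pt) : R := fst a * fst b + snd a * snd b.

Definition lin_indep (a b : pt) : Prop :=
  forall s t : R, s * fst a + t * fst b = 0 -> s * snd a + t * snd b = 0 ->
    s = 0 /\ t = 0.

Definition nondeg_rhombus (p1 p2 p3 p4 : pt) : Prop :=
  vsub p2 p1 = vsub p3 p4 /\ vsub p3 p2 = vsub p4 p1 /\
  lin_indep (vsub p2 p1) (vsub p3 p2) /\
  dot (vsub p2 p1) (vsub p2 p1) = dot (vsub p3 p2) (vsub p3 p2) /\
  dot (vsub p3 p2) (vsub p3 p2) = dot (vsub p4 p3) (vsub p4 p3) /\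
  dot (vsub p4 p3) (vsub p4 p3) = dot (vsub p1 p4) (vsub p1 p4).

Record framework := { joints : list pt; bars : list (pt * pt) }.

(* Infinitesimal motion g : X -> R^2 (represented as a function on all of
   R^2; only its values on joints matter). *)
Definition inf_motion (F : framework) (g : pt -> pt) : Prop :=
  forall x y, In (x, y) (bars F) ->
    dot (vsub (g x) (g y)) (vsub x y) = 0.

Definition rhombus_framework (p1 p2 p3 p4 : pt) : framework :=
  {| joints := p1 :: p2 :: p3 :: p4 :: nil;
     bars := (p1, p2) :: (p2, p3) :: (p3, p4) :: (p4, p1) :: nil |}.

(* Only the parallelogram structure matters: the bars p1p2 and p3p4 are parallel
   to a = p2 - p1, the bars p2p3 and p4p1 to b = p3 - p2, so summing the bar
   conditions in pairs shows that v1 + v3 - v2 - v4 is orthogonal to both a and b.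
   Since a and b span the plane, that vector vanishes. *)

From Stdlib Require Import Reals Lra.
Open Scope R_scope.

Lemma vadd_comm (u v : pt) : vadd u v = vadd v u.
Proof. unfold vadd; f_equal; ring. Qed.

Lemma vsub_eq0 (u v : pt) : vsub u v = (0, 0) -> u = v.
Proof.
  destruct u as [u1 u2], v as [v1 v2]; unfold vsub; simpl.
  intros E; injection E; intros; f_equal; lra.
Qed.

Lemma dot_vsubC (u x y : pt) : dot u (vsub y x) = - dot u (vsub x y).
Proof. unfold dot, vsub; simpl; ring. Qed.

Lemma dot_vsubCC (u v x y : pt) : dot (vsub u v) (vsub x y) = dot (vsub v u) (vsub y x).
Proof. unfold dot, vsub; simpl; ring. Qed.

Lemma dot_vsub_add (u v w z c : pt) :
  dot (vsub u v) c + dot (vsub w z) c = dot (vsub (vadd u w) (vadd v z)) c.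
Proof. unfold dot, vsub, vadd; simpl; ring. Qed.

Lemma lin_indep_det (a b : pt) :
  lin_indep a b -> fst a * snd b - snd a * fst b <> 0.
Proof.
  destruct a as [a1 a2], b as [b1 b2]; unfold lin_indep; simpl.
  intros Hind D.
  destruct (Hind b2 (- a2)) as [Hb2 Ha2]; [nra | nra |].
  destruct (Hind b1 (- a1)) as [Hb1 Ha1]; [nra | nra |].
  destruct (Hind 1 0) as [C _]; [nra | nra | lra].
Qed.

Lemma orthogonal_lin_indep_eq0 (a b q : pt) :
  lin_indep a b -> dot q a = 0 -> dot q b = 0 -> q = (0, 0).
Proof.
  intros Hind%lin_indep_det; revert Hind.
  destruct a as [a1 a2], b as [b1 b2], q as [q1 q2]; unfold dot; simpl.
  intros D Qa Qb.
  assert (Z1 : q1 * (a1 * b2 - a2 * b1) = 0).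
  { replace (q1 * (a1 * b2 - a2 * b1))
      with (b2 * (q1 * a1 + q2 * a2) - a2 * (q1 * b1 + q2 * b2)) by ring.
    rewrite Qa, Qb; ring. }
  assert (Z2 : q2 * (a1 * b2 - a2 * b1) = 0).
  { replace (q2 * (a1 * b2 - a2 * b1))
      with (a1 * (q1 * b1 + q2 * b2) - b1 * (q1 * a1 + q2 * a2)) by ring.
    rewrite Qa, Qb; ring. }
  apply Rmult_integral in Z1, Z2.
  destruct Z1 as [-> | ]; [| contradiction].
  destruct Z2 as [-> | ]; [reflexivity | contradiction].
Qed.

Lemma parallelogram_motion_balanced (p1 p2 p3 p4 : pt) (g : pt -> pt) :
  vsub p2 p1 = vsub p3 p4 -> vsub p3 p2 = vsub p4 p1 ->
  lin_indep (vsub p2 p1) (vsub p3 p2) ->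
  inf_motion (rhombus_framework p1 p2 p3 p4) g ->
  vadd (g p1) (g p3) = vadd (g p2) (g p4).
Proof.
  intros Ea Eb Hind M.
  assert (B12 := M p1 p2 ltac:(simpl; tauto)).
  assert (B23 := M p2 p3 ltac:(simpl; tauto)).
  assert (B34 := M p3 p4 ltac:(simpl; tauto)).
  assert (B41 := M p4 p1 ltac:(simpl; tauto)).
  apply vsub_eq0, (orthogonal_lin_indep_eq0 _ _ _ Hind).
  - rewrite <- dot_vsub_add, dot_vsubC, Ea, B12, B34; ring.
  - rewrite (vadd_comm (g p2)), <- dot_vsub_add.
    rewrite (dot_vsubCC (g p3)), B23, Eb, dot_vsubC, dot_vsubCC, B41; ring.
Qed.

Theorem lemma3 (p1 p2 p3 p4 : pt) (g : pt -> pt) :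
  nondeg_rhombus p1 p2 p3 p4 ->
  inf_motion (rhombus_framework p1 p2 p3 p4) g ->
  vadd (g p1) (g p3) = vadd (g p2) (g p4).
Proof.
  intros (Ea & Eb & Hind & _).
  exact (parallelogram_motion_balanced p1 p2 p3 p4 g Ea Eb Hind).
Qed.
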